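(* Let $\mathcal T$ be a local type with encoding dimension $d$. The equality function $\mathcal T\times\mathcal T\to\mathrm{Bool}$, $(x,y)\mapsto[x=y]$, is representable in $\mathrm{ResMLP}(2d,2)$.
   Context: A local type $\mathcal T$ is a finite set $S$ together with an injective encoding $\phi_{\mathcal T}:S\to\mathbb{R}^{d_{\mathcal T}}$. The product type $\mathcal T_1\times\dots\times\mathcal T_n$ has underlying set $S_1\times\dots\times S_n$ and encoding $(s_1,\dots,s_n)\mapsto\phi_1(s_1)\oplus\dots\oplus\phi_n(s_n)$ (concatenation), of dimension $\sum d_i$. $\mathrm{Bool}$ is the local type $\{\mathrm{false},\mathrm{true}\}$ encoded in $\mathbb{R}^1$ by $\mathrm{false}\mapsto0$, $\mathrm{true}\mapsto1$. A single-layer fully connected network of dimension $d$ is $f_{\mathrm{fcn}}(X)=W_2\,\mathrm{ReLU}(W_1X+B_1)+B_2$ with $W_1\in\mathbb{R}^{4d\times d}$, $B_1\in\mathbb{R}^{4d}$, $W_2\in\mathbb{R}^{d\times 4d}$, $B_2\in\mathbb{R}^d$. $\mathrm{ResMLP}(d,L)$ is the set of maps $X\mapsto X^{(L)}$ with $X^{(0)}=X$, $X^{(l)}=X^{(l-1)}+f^{(l)}_{\mathrm{fcn}}(X^{(l-1)})$. A function $f:\mathcal T\to\mathcal R$ between local types is representable in $\mathrm{ResMLP}(d,L)$ ($d\ge\max(d_{\mathcal T},d_{\mathcal R})$) if there is $\tilde f\in\mathrm{ResMLP}(d,L)$ with $\iota_1\circ\phi_{\mathcal R}\circ f=\tilde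 f\circ\iota_2\circ\phi_{\mathcal T}$, where $\iota_1,\iota_2$ pad with zeros into $\mathbb{R}^d$. *)

From HB Require Import structures.
From mathcomp Require Import all_boot all_order all_algebra.
From mathcomp Require Import reals.
Set Implicit Arguments. Unset Strict Implicit. Unset Printing Implicit Defensive.
Import Order.TTheory GRing.Theory Num.Theory.
Local Open Scope ring_scope.

Section LocalTypes.
Variable R : realType.

Record localType := LocalType {
  lt_carrier : finType;
  lt_dim : nat;
  lt_enc : lt_carrier -> 'cV[R]_lt_dim;
  lt_enc_inj : injective lt_enc }.

Definition prod_enc (T1 T2 : localType) (s : (lt_carrier T1 * lt_carrier T2)%type)
  : 'cV[R]_(lt_dim T1 + lt_dim T2) :=
  col_mx (@lt_enc T1 s.1) (@lt_enc T2 s.2).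

Lemma prod_enc_inj (T1 T2 : localType) : injective (@prod_enc T1 T2).
Proof.
move=> [a1 a2] [b1 b2]; rewrite /prod_enc /= => /eq_col_mx [h1 h2].
by rewrite (lt_enc_inj h1) (lt_enc_inj h2).
Qed.

Definition prodLT (T1 T2 : localType) : localType :=
  @LocalType (lt_carrier T1 * lt_carrier T2)%type (lt_dim T1 + lt_dim T2)
    (@prod_enc T1 T2) (@prod_enc_inj T1 T2).

Definition bool_enc (b : bool) : 'cV[R]_1 := const_mx (b%:R).

Lemma bool_enc_inj : injective bool_enc.
Proof.
move=> [] [] // /matrixP /(_ ord0 ord0); rewrite !mxE /= => /eqP;
  by rewrite ?oner_eq0 // eq_sym oner_eq0.
Qed.

Definition BoolLT : localType := @LocalType bool 1 bool_enc bool_enc_inj.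

Definition relu n (v : 'cV[R]_n) : 'cV[R]_n := map_mx (fun x => Num.max x 0) v.

Record fcn_params (d : nat) := FcnParams {
  W1 : 'M[R]_(4 * d, d);
  B1 : 'cV[R]_(4 * d);
  W2 : 'M[R]_(d, 4 * d);
  B2 : 'cV[R]_d }.

Definition fcn d (p : fcn_params d) (X : 'cV[R]_d) : 'cV[R]_d :=
  W2 p *m relu (W1 p *m X + B1 p) + B2 p.

Definition resmlp_eval d (ps : seq (fcn_params d)) (X : 'cV[R]_d) : 'cV[R]_d :=
  foldl (fun Y p => Y + fcn p Y) X ps.

Definition ResMLP (d L : nat) (g : 'cV[R]_d -> 'cV[R]_d) : Prop :=
  exists ps : seq (fcn_params d), size ps = L /\ forall X, g X = resmlp_eval ps X.

Definition pad n d (v : 'cV[R]_n) : 'cV[R]_d :=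
  \col_(i < d) (match insub (val i) : option 'I_n with
                | Some j => v j ord0 | None => 0 end).

Definition representable (T U : localType) (f : lt_carrier T -> lt_carrier U)
    (d L : nat) : Prop :=
  (maxn (lt_dim T) (lt_dim U) <= d)%N /\
  exists g : 'cV[R]_d -> 'cV[R]_d, ResMLP L g /\
    forall s : lt_carrier T,
      pad d (@lt_enc U (f s)) = g (pad d (@lt_enc T s)).

End LocalTypes.

Definition eq_fun (R : realType) (T : localType R)
  (p : lt_carrier (prodLT T T)) : lt_carrier (BoolLT R) := p.1 == p.2.

From mathcomp Require Import all_boot all_order all_algebra.
From mathcomp Require Import reals.
From mathcomp Require Import zify ring lra.
Set Implicit Arguments. Unset Strict Implicit. Unset Printing Implicit Defensive.
Import Order.TTheory GRing.Theory Num.Theory.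
Local Open Scope ring_scope.

(* Every two-layer perceptron of hidden width 2n is one residual block:
   the remaining 2n hidden units compute relu X and relu (-X), and
   X = relu X - relu (-X) cancels the skip connection.  The first block sends
   the encoding of (x, y) to K * |enc x - enc y|_1 on coordinate 0, using
   |t| = relu t + relu (-t); as there are finitely many pairs, K can be chosen
   with K * |enc x - enc y|_1 >= 1 whenever x <> y.  The second block applies
   y |-> 1 - (relu y - relu (y - 1)), which is 1 at 0 and 0 on [1, +oo). *)

Section EqualityNetwork.
Variable R : realType.

Lemma relu_col_mx m1 m2 (u : 'cV[R]_m1) (v : 'cV[R]_m2) :
  relu (col_mx u v) = col_mx (relu u) (relu v).
Proof. exact: map_col_mx. Qed.

Lemma reluE n (v : 'cV[R]_n) i j : relu v i j = Num.max (v i j) 0.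
Proof. exact: mxE. Qed.

Lemma reluN_sub n (v : 'cV[R]_n) : relu (- v) - relu v = - v.
Proof.
apply/matrixP => i j; rewrite !mxE /Num.max /Order.max.
by repeat case: ifP => ?; lra.
Qed.

Definition mlp2 n (A : 'M[R]_(2 * n, n)) (c : 'cV[R]_(2 * n))
    (B : 'M[R]_(n, 2 * n)) (e : 'cV[R]_n) (X : 'cV[R]_n) : 'cV[R]_n :=
  B *m relu (A *m X + c) + e.

(* The hidden width n + (n + 2 * n) is convertible to the 4 * n of [fcn]. *)
Definition resblock n (A : 'M[R]_(2 * n, n)) (c : 'cV[R]_(2 * n))
    (B : 'M[R]_(n, 2 * n)) (e : 'cV[R]_n) : fcn_params R n :=
  FcnParams (col_mx 1%:M (col_mx (- 1%:M) A)) (col_mx 0 (col_mx 0 c))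
    (row_mx (- 1%:M) (row_mx 1%:M B)) e.

Lemma resblockE n A c B e (X : 'cV[R]_n) :
  X + fcn (@resblock n A c B e) X = mlp2 A c B e X.
Proof.
rewrite /fcn /resblock /mlp2 /= !mul_col_mx !add_col_mx !relu_col_mx.
rewrite !mul_row_col !mulNmx !mul1mx !addr0 addrA [- relu X + _]addrA.
by rewrite [- relu X + _]addrC reluN_sub addrA subrr add0r.
Qed.

(* Entry [k] of a column vector, read as [0] beyond its length, like [pad]. *)
Definition cvnth m (v : 'cV[R]_m) (k : nat) : R :=
  if insub k is Some i then v i ord0 else 0.

Lemma cvnth_ord m (v : 'cV[R]_m) (i : 'I_m) : cvnth v i = v i ord0.
Proof. by rewrite /cvnth valK. Qed.

Lemma cvnth_default m (v : 'cV[R]_m) k : (m <= k)%N -> cvnth v k = 0.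
Proof. by move=> le_mk; rewrite /cvnth insubF // ltnNge le_mk. Qed.

Lemma padE m n (v : 'cV[R]_m) i j : pad n v i j = cvnth v i.
Proof. by rewrite mxE. Qed.

Lemma cvnth_pad m n (v : 'cV[R]_m) k : (m <= n)%N -> cvnth (pad n v) k = cvnth v k.
Proof.
move=> le_mn; case: (ltnP k n) => [lt_kn | le_nk].
  by rewrite -[k]/(val (Ordinal lt_kn)) cvnth_ord padE.
by rewrite !cvnth_default // (leq_trans le_mn).
Qed.

Lemma cvnth_col_mxl m1 m2 (u : 'cV[R]_m1) (v : 'cV[R]_m2) (k : 'I_m1) :
  cvnth (col_mx u v) k = u k ord0.
Proof. by rewrite (cvnth_ord _ (lshift m2 k)) col_mxEu. Qed.

Lemma cvnth_col_mxr m1 m2 (u : 'cV[R]_m1) (v : 'cV[R]_m2) (k : 'I_m2) :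
  cvnth (col_mx u v) (k + m1) = v k ord0.
Proof. by rewrite [(k + m1)%N]addnC (cvnth_ord _ (rshift m1 k)) col_mxEd. Qed.

Lemma sum_delta_mul n (F : 'I_n -> R) m (lt_mn : (m < n)%N) :
  \sum_(i < n) (i == m :> nat)%:R * F i = F (Ordinal lt_mn).
Proof.
rewrite (bigD1 (Ordinal lt_mn)) //= eqxx mul1r big1 ?addr0 // => i ne_i.
suff /negbTE -> : val i != m by rewrite mul0r.
by apply: contra ne_i => /eqP eq_im; apply/eqP/val_inj.
Qed.

Lemma sum_delta_cvnth n (v : 'cV[R]_n) m :
  \sum_(i < n) (i == m :> nat)%:R * v i ord0 = cvnth v m.
Proof.
case: (ltnP m n) => [lt_mn | le_nm]; first by rewrite sum_delta_mul -cvnth_ord.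
rewrite cvnth_default // big1 // => i _.
suff /negbTE -> : val i != m by rewrite mul0r.
by apply: (contraTneq _ le_nm) => <-; rewrite -ltnNge ltn_ord.
Qed.

Lemma sum_ord_halves d (F : nat -> R) :
  (forall h, (2 * d <= h)%N -> F h = 0) ->
  \sum_(h < 2 * (2 * d)) F h = \sum_(k < d) (F k + F (k + d)%N).
Proof.
move=> F_out; rewrite -(big_mkord xpredT F).
rewrite (big_cat_nat _ (n := 2 * d)) //=; last by lia.
rewrite [X in _ + X]big_nat_cond [X in _ + X]big1 ?addr0; last first.
  by move=> h /andP[/andP[le_h _] _]; apply: F_out.
rewrite (big_cat_nat _ (n := d)) //=; last by lia.
rewrite -{2}[d]add0n big_addn.
have -> : (2 * d - d = d)%N by lia.
by rewrite !big_mkord -big_split.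
Qed.

Lemma max0_add_maxN0 (x : R) : Num.max x 0 + Num.max (- x) 0 = `|x|.
Proof.
rewrite /Num.max /Order.max; case: (lerP 0 x) => [x_ge0 | x_lt0].
  by rewrite ger0_norm //; repeat case: ifP => ?; lra.
by rewrite ltr0_norm //; repeat case: ifP => ?; lra.
Qed.

Definition delta0 n : 'cV[R]_n := \col_i (i == 0 :> nat)%:R.

Definition absdiff_mx d : 'M[R]_(2 * (2 * d), 2 * d) :=
  \matrix_(h, k)
    if (h < d)%N then (k == h :> nat)%:R - (k == h + d :> nat)%N%:R
    else if (h < 2 * d)%N then (k == h :> nat)%:R - (k == h - d :> nat)%N%:R
    else 0.

Definition sum0_mx d (K : R) : 'M[R]_(2 * d, 2 * (2 * d)) :=
  \matrix_(j, h) (K * (j == 0 :> nat)%:R).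

Lemma absdiff_mxE d (X : 'cV[R]_(2 * d)) h :
  (absdiff_mx d *m X) h ord0 =
    if (h < d)%N then cvnth X h - cvnth X (h + d)
    else if (h < 2 * d)%N then cvnth X h - cvnth X (h - d)
    else 0.
Proof.
rewrite mxE; under eq_bigr => k _ do rewrite mxE.
case: ifP => _; last case: ifP => _; last by rewrite big1 // => k _; rewrite mul0r.
all: by under eq_bigr => k _ do rewrite mulrBl; rewrite sumrB !sum_delta_cvnth.
Qed.

Lemma absdiff_layerE d (K : R) (X : 'cV[R]_(2 * d)) :
  mlp2 (absdiff_mx d) 0 (sum0_mx d K) 0 X =
  (K * \sum_(k < d) `|cvnth X k - cvnth X (k + d)|) *: delta0 (2 * d).
Proof.
apply/matrixP => j j0; rewrite ord1 /mlp2 !addr0 !mxE.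
under eq_bigr => h _ do rewrite mxE reluE absdiff_mxE.
rewrite -big_distrr /= mulrAC; congr (_ * _ * _).
pose x := cvnth X.
rewrite (sum_ord_halves (F := fun h => Num.max (if (h < d)%N then x h - x (h + d)%N
  else if (h < 2 * d)%N then x h - x (h - d)%N else 0) 0)); last first.
  move=> h le_h; rewrite ifF; last by lia.
  by rewrite ifF ?maxxx //; lia.
apply: eq_bigr => k _; rewrite ltn_ord.
have -> : (k + d < d)%N = false by lia.
have -> : (k + d < 2 * d)%N by have := ltn_ord k; lia.
by rewrite addnK -[x (k + d)%N - _]opprB max0_add_maxN0.
Qed.

Definition ramp (y : R) : R := Num.max y 0 - Num.max (y - 1) 0.

Lemma ramp_le0 (y : R) : y <= 0 -> ramp y = 0.
Proof.
by move=> y_le0; rewrite /ramp /Num.max /Order.max; repeat case: ifP => ?; lra.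
Qed.

Lemma ramp_ge1 (y : R) : 1 <= y -> ramp y = 1.
Proof.
by move=> y_ge1; rewrite /ramp /Num.max /Order.max; repeat case: ifP => ?; lra.
Qed.

Definition step_in_mx n : 'M[R]_(2 * n, n) :=
  \matrix_(h, k) ((h < 2)%N%:R * (k == 0 :> nat)%:R).

Definition step_bias n : 'cV[R]_(2 * n) := \col_h - (h == 1 :> nat)%:R.

Definition step_out_mx n : 'M[R]_(n, 2 * n) :=
  \matrix_(j, h) ((j == 0 :> nat)%:R * ((h == 1 :> nat)%:R - (h == 0 :> nat)%:R)).

Lemma step_layerE n (y : R) :
  mlp2 (step_in_mx n) (step_bias n) (step_out_mx n) (delta0 n) (y *: delta0 n) =
  (1 - ramp y) *: delta0 n.
Proof.
apply/matrixP => j j0; rewrite ord1.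
have n_gt0 : (0 < n)%N by apply: leq_ltn_trans (ltn_ord j).
have hiddenE h : (step_in_mx n *m (y *: delta0 n) + step_bias n) h ord0 =
    y * (h < 2)%N%:R - (h == 1 :> nat)%:R.
  rewrite mxE [X in X + _]mxE mxE; under eq_bigr => k _ do rewrite mxE -mulrA.
  by rewrite -big_distrr sum_delta_cvnth (cvnth_ord _ (Ordinal n_gt0)) !mxE mulr1 mulrC.
rewrite /mlp2 mxE [X in X + _]mxE.
under eq_bigr => h _ do rewrite mxE reluE hiddenE -mulrA.
rewrite -big_distrr /=; under eq_bigr => h _ do rewrite mulrBl.
have lt_1_2n : (1 < 2 * n)%N by lia.
rewrite sumrB (sum_delta_mul _ lt_1_2n) (sum_delta_mul _ (ltnW lt_1_2n)) /=.
by rewrite !mxE mulr1 subr0 /ramp; ring.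
Qed.

Lemma pad_bool_enc n b : pad n (bool_enc R b) = b%:R *: delta0 n.
Proof.
apply/matrixP => i j; rewrite padE !mxE; case: (posnP i) => [-> | i_gt0].
  by rewrite (cvnth_ord _ ord0) mxE mulr1.
by rewrite cvnth_default // mulr0.
Qed.

Definition l1_dist m (u v : 'cV[R]_m) : R := \sum_i `|u i ord0 - v i ord0|.

Lemma l1_distxx m (u : 'cV[R]_m) : l1_dist u u = 0.
Proof. by rewrite /l1_dist big1 // => i _; rewrite subrr normr0. Qed.

Lemma l1_dist_gt0 m (u v : 'cV[R]_m) : u != v -> 0 < l1_dist u v.
Proof.
have dist_ge0 : 0 <= l1_dist u v by apply: sumr_ge0 => i _; apply: normr_ge0.
rewrite lt_def dist_ge0 andbT; apply: contra => /eqP /psumr_eq0P dist0.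
apply/eqP/matrixP => i j; rewrite ord1; apply/eqP.
by rewrite -subr_eq0 -normr_eq0 dist0.
Qed.

Lemma absdiff_pad_col_mx d (u v : 'cV[R]_d) :
  \sum_(k < d) `|cvnth (pad (2 * d) (col_mx u v)) k -
                 cvnth (pad (2 * d) (col_mx u v)) (k + d)| = l1_dist u v.
Proof.
apply: eq_bigr => k _.
by rewrite !cvnth_pad ?cvnth_col_mxl ?cvnth_col_mxr //; lia.
Qed.

Lemma exists_scale_ge1 (I : finType) (P : pred I) (s : I -> R) :
  (forall i, P i -> 0 < s i) -> exists K, forall i, P i -> 1 <= K * s i.
Proof.
move=> s_gt0; exists (\sum_(i | P i) (s i)^-1) => i Pi.
rewrite (bigD1 i) //= mulrDl mulVf ?lt0r_neq0 ?s_gt0 // lerDl.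
rewrite mulr_ge0 ?(ltW (s_gt0 i Pi)) //.
by apply: sumr_ge0 => k /andP[Pk _]; rewrite invr_ge0 ltW ?s_gt0.
Qed.

End EqualityNetwork.

Theorem proposition4 (R : realType) (T : localType R) :
  (0 < lt_dim T)%N ->
  representable (@eq_fun R T) (2 * lt_dim T) 2.
Proof.
move=> d_gt0; set d := lt_dim T.
split; first by rewrite /= geq_max; apply/andP; split; lia.
have [K K_ge1] : exists K, forall p : lt_carrier T * lt_carrier T,
    p.1 != p.2 -> 1 <= K * l1_dist (lt_enc p.1) (lt_enc p.2).
  apply: exists_scale_ge1 => -[x y] /= neq_xy; apply: l1_dist_gt0.
  by apply: contra neq_xy => /eqP /lt_enc_inj ->.
pose net := [:: resblock (absdiff_mx R d) 0 (sum0_mx d K) 0;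
                resblock (step_in_mx R _) (step_bias R _) (step_out_mx R _) (delta0 R _)].
exists (resmlp_eval net); split; first by exists net.
move=> [x y]; rewrite /resmlp_eval /= !resblockE absdiff_layerE absdiff_pad_col_mx.
rewrite step_layerE pad_bool_enc /eq_fun /=; congr (_ *: _).
have [<- | neq_xy] := eqVneq x y; first by rewrite l1_distxx mulr0 ramp_le0 ?subr0.
by rewrite ramp_ge1 ?subrr // (K_ge1 (x, y)).
Qed.
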